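(* In the design described in the context, suppose the boundaries $l_{k,j}\le u_{k,j}$ ($l_{k,J_k}=u_{k,J_k}$) are chosen so that, under the global null hypothesis $H_G:\mu_0=\mu_1=\dots=\mu_K$, $$P\Big(\bigcap_{k=1}^K\bigcup_{j=1}^{J_k}\Big[\bigcap_{i=1}^{j-1}\{l_{k,i}\le Z_{k,i}\le u_{k,i}\}\cap\{Z_{k,j}<l_{k,j}\}\Big]\Big)=1-\alpha$$ (i.e. with probability $1-\alpha$ every arm's statistic path falls below its lower boundary before ever exceeding its upper boundary; empty intersections are the whole sample space). Then the family-wise error rate is controlled in the strong sense at level $\alpha$: for every configuration of means $(\mu_0,\dots,\mu_K)$, the probability of rejecting at least one true $H_{0k}$ is at most $\alpha$.
   Context: A trial compares $K$ experimental arms with one common control arm (arm $0$). Outcomes on arm $k\in\{0,\dots,K\}$ are independent $N(\mu_k,\sigma^2)$ with $\sigma^2$ known. The control is recruited over stages $1,\dots,J_0$, with an analysis at the end of each stage; $n_{0,j}$ denotes the cumulative number of control patients by the end of stage $j$ ($n_{0,0}=0$). Experimental arm $k$ is added at the end of control stage $s(k)\ge 0$ and has analyses $j=1,\dots,J_k$ (with $s(k)+J_k\le J_0$), its $j$-th analysis coinciding with the end of control stage $s(k)+j$; $n_{k,j}$ denotes the cumulative number of patients on arm $k$ by its $j$-th analysis. Only concurrent controls are used: the test statistic for arm $k$ at its $j$-th analysis is $$Z_{k,j}=\frac{n_{k,j}^{-1}\sum_{i=1}^{n_{k,j}}X_{k,i}-(n_{0,s(k)+j}-n_{0,s(k)})^{-1}\sum_{i=n_{0,s(k)}+1}^{n_{0,s(k)+j}}X_{0,i}}{\sigma\sqrt{n_{k,j}^{-1}+(n_{0,s(k)+j}-n_{0,s(k)})^{-1}}},$$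 where $X_{k,i}$ is the outcome of the $i$-th patient on arm $k$. The null hypotheses are $H_{0k}:\mu_k\le\mu_0$, $k=1,\dots,K$. At the $j$-th analysis of an arm $k$ still in the trial, if $Z_{k,j}>u_{k,j}$ then $H_{0k}$ is rejected and the whole trial stops; if $Z_{k,j}<l_{k,j}$ arm $k$ is dropped from all subsequent stages; otherwise arm $k$ (and the control) continue to the next stage. The trial also stops if all arms have been dropped. Strong control of the FWER at level $\alpha$ means that for every configuration of the means the probability of rejecting at least one true $H_{0k}$ is at most $\alpha$. *)

From HB Require Import structures.
From mathcomp Require Import all_boot all_order all_algebra.
From mathcomp Require Import all_classical all_reals all_analysis.
Import Order.TTheory GRing.Theory Num.Theory.
Local Open Scope classical_set_scope.
Local Open Scope ring_scope.

(* Experimental arm k+1 of the paper is [Some k] with [k : 'I_K];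
   the control (arm 0) is [None].  Patients are indexed from 0: patient i
   of the paper (1-based) is index i-1 here. *)
Record design (R : Type) := Design {
  K : nat;
  J0 : nat;                       (* number of control stages *)
  n0 : nat -> nat;                (* n_{0,j}: cumulative control sample size *)
  s : 'I_K -> nat;                (* s(k): control stage at whose end arm k is added *)
  J : 'I_K -> nat;                (* J_k: number of analyses of arm k *)
  nk : 'I_K -> nat -> nat;        (* n_{k,j}: cumulative size of arm k at its analysis j *)
  lb : 'I_K -> nat -> R;
  ub : 'I_K -> nat -> R
}.

Arguments K {R} d.
Arguments J0 {R} d.
Arguments n0 {R} d _.
Arguments s {R} d _.
Arguments J {R} d _.
Arguments nk {R} d _ _.
Arguments lb {R} d _ _.
Arguments ub {R} d _ _.

Set Implicit Arguments. Unset Strict Implicit. Unset Printing Implicit Defensive.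

Definition design_ok (R : realType) (D : design R) : Prop :=
  [/\ n0 D 0 = 0%N,
      (forall j, (j < J0 D)%N -> (n0 D j < n0 D j.+1)%N),
      (forall k, (1 <= J D k)%N /\ (s D k + J D k <= J0 D)%N) &
      (forall k j, (1 <= j <= J D k)%N -> (0 < nk D k j)%N)] /\
  [/\ (forall k j, (1 <= j < J D k)%N -> (nk D k j <= nk D k j.+1)%N),
      (forall k j, (1 <= j <= J D k)%N -> lb D k j <= ub D k j) &
      (forall k, lb D k (J D k) = ub D k (J D k))].

Section Trial.
Variables (R : realType) (D : design R) (sigma : R).

(* outcome data: x a i = outcome of the (i+1)-th patient of arm a *)
Definition data_t := option 'I_(K D) -> nat -> R.

Definition ctrl_size (k : 'I_(K D)) (j : nat) : nat :=
  (n0 D (s D k + j) - n0 D (s D k))%N.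

(* Z_{k,j}, using concurrent controls only *)
Definition Zstat (x : data_t) (k : 'I_(K D)) (j : nat) : R :=
  let nkj := nk D k j in
  let m := ctrl_size k j in
  ((nkj%:R)^-1 * (\sum_(i < nkj) x (Some k) i)
   - (m%:R)^-1 * (\sum_(n0 D (s D k) <= i < n0 D (s D k + j)) x None i))
  / (sigma * Num.sqrt ((nkj%:R)^-1 + (m%:R)^-1)).

Definition cont (x : data_t) (k : 'I_(K D)) (i : nat) : Prop :=
  lb D k i <= Zstat x k i <= ub D k i.

(* the trial has not stopped (by an efficacy rejection) at any analysis
   performed at the end of control stages 1..t *)
Fixpoint nostop (x : data_t) (t : nat) : Prop :=
  match t with
  | 0 => True
  | t'.+1 => nostop x t' /\
      forall k : 'I_(K D), (s D k < t'.+1 <= s D k + J D k)%N ->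
        (forall i, (1 <= i < t'.+1 - s D k)%N -> cont x k i) ->
        Zstat x k (t'.+1 - s D k) <= ub D k (t'.+1 - s D k)
  end.

(* arm k is still in the trial at its j-th analysis (end of control stage
   s(k)+j): the trial has not stopped before, and arm k was not dropped *)
Definition active (x : data_t) (k : 'I_(K D)) (j : nat) : Prop :=
  nostop x (s D k + j).-1 /\ forall i, (1 <= i < j)%N -> cont x k i.

Definition rejects (x : data_t) (k : 'I_(K D)) : Prop :=
  exists j, [/\ (1 <= j <= J D k)%N, active x k j & ub D k j < Zstat x k j].

Definition fwer_event (mu : option 'I_(K D) -> R) (x : data_t) : Prop :=
  exists k : 'I_(K D), mu (Some k) <= mu None /\ rejects x k.

Definition all_futile (x : data_t) : Prop :=
  forall k : 'I_(K D), exists j, [/\ (1 <= j <= J D k)%N,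
     (forall i, (1 <= i < j)%N -> cont x k i) & Zstat x k j < lb D k j].

End Trial.

Definition outcomes (R : realType) (D : design R) (T : Type)
  (mu : option 'I_(K D) -> R) (sigma : R)
  (E : option 'I_(K D) -> nat -> T -> R) (w : T) : data_t D :=
  fun a i => mu a + sigma * E a i w.

Definition mutually_independent d (T : measurableType d) (R : realType)
  (P : probability T R) (I : eqType) (X : I -> T -> R) : Prop :=
  forall (F : seq I) (B : I -> set R), uniq F -> (forall i, measurable (B i)) ->
    P (\bigcap_(i in [set i | i \in F]) (X i @^-1` B i)) =
    (\prod_(i <- F) P (X i @^-1` B i))%E.

Definition iid_std_normal d (T : measurableType d) (R : realType)
  (P : probability T R) (I : eqType) (X : I -> T -> R) : Prop :=
  [/\ forall i, measurable_fun setT (X i),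
      forall i (B : set R), measurable B -> P (X i @^-1` B) = normal_prob 0 1 B &
      mutually_independent P X].

From HB Require Import structures.
From mathcomp Require Import all_boot all_order all_algebra.
From mathcomp Require Import all_classical all_reals all_analysis.
From mathcomp Require Import ring.
Import Order.TTheory GRing.Theory Num.Theory.
Local Open Scope classical_set_scope.
Local Open Scope ring_scope.

(* Strong FWER control by a coupling argument.

   Write every outcome as X_{a,i} = mu_a + sigma E_{a,i} with the same noise
   E for every mean configuration.  Since only concurrent controls enter
   Z_{k,j}, a shift of the means moves Z_{k,j} by the deterministic drift
   (mu_k - mu_0) / (sigma sqrt(1/n_{k,j} + 1/m_{k,j})), which is <= 0 when
   H_{0k} is true.  Hence, sample point by sample point, the statistics of
   a true-null arm under mu are dominated by those under the global null
   mu = 0.  A path-wise argument then shows that if such an arm is rejected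
   under mu, the dominating path cannot fall below its lower boundary
   before leaving the continuation region, i.e. the calibration event fails
   under the global null.  So the FWER event is contained in the complement
   of the calibration event, whose probability is 1 - (1 - alpha) = alpha.
   Since the calibration hypothesis already refers to the same noise E,
   only the measurability of E is used, not its normality or independence. *)

Lemma mean_shift (R : fieldType) (n : nat) (c S : R) : n%:R != 0 :> R ->
  n%:R^-1 * (c *+ n + S) = c + n%:R^-1 * S.
Proof. by move=> n0; rewrite mulrDr -[c *+ n]mulr_natl mulrA mulVf ?mul1r. Qed.

Lemma Zstat_drift (R : realType) (D : design R) (sigma : R) (T : Type)
  (mu : option 'I_(K D) -> R) (E : option 'I_(K D) -> nat -> T -> R)
  (w : T) (k : 'I_(K D)) (j : nat) :
  (0 < nk D k j)%N -> (n0 D (s D k) < n0 D (s D k + j))%N ->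
  Zstat sigma (outcomes mu sigma E w) k j =
  Zstat sigma (outcomes (fun _ => 0) sigma E w) k j
  + (mu (Some k) - mu None)
    / (sigma * Num.sqrt ((nk D k j)%:R^-1 + (ctrl_size k j)%:R^-1)).
Proof.
move=> nk_gt0 ctrl_gt0.
rewrite /Zstat /outcomes !big_split /= !sumr_const card_ord !sumr_const_nat.
by rewrite !mean_shift ?pnatr_eq0 -?lt0n ?subn_gt0 //; ring.
Qed.

(* In a valid design the cumulative control sizes increase strictly, so
   every analysis of an arm uses at least one concurrent control patient. *)
Lemma ctrl_size_gt0 (R : realType) (D : design R) (k : 'I_(K D)) (j : nat) :
  design_ok D -> (1 <= j <= J D k)%N ->
  (n0 D (s D k) < n0 D (s D k + j))%N.
Proof.
move=> [[_ n0_inc arm_ok _] _] /andP[j_ge1 j_le].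
have n0_mono a b : (a < b)%N -> (b <= J0 D)%N -> (n0 D a < n0 D b)%N.
  elim: b => // b IH; rewrite ltnS leq_eqVlt => /predU1P[-> | a_lt] b_lt.
    exact: n0_inc.
  exact: ltn_trans (IH a_lt (ltnW b_lt)) (n0_inc b b_lt).
have [_ last_le] := arm_ok k.
apply: n0_mono; first by rewrite -[X in (X < _)%N]addn0 ltn_add2l.
by apply: leq_trans last_le; rewrite leq_add2l.
Qed.

(* Under a true null H_{0k} (mu_k <= mu_0) the drift is non-positive, so
   every statistic of arm k is dominated by its global-null counterpart
   computed from the same noise. *)
Lemma Zstat_le_global_null (R : realType) (D : design R) (sigma : R) (T : Type)
  (mu : option 'I_(K D) -> R) (E : option 'I_(K D) -> nat -> T -> R)
  (w : T) (k : 'I_(K D)) (j : nat) :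
  design_ok D -> 0 < sigma -> mu (Some k) <= mu None -> (1 <= j <= J D k)%N ->
  Zstat sigma (outcomes mu sigma E w) k j
  <= Zstat sigma (outcomes (fun _ => 0) sigma E w) k j.
Proof.
move=> ok sigma_gt0 null jJ.
have nk_gt0 : (0 < nk D k j)%N by case: ok => -[_ _ _ nk_pos] _; exact: nk_pos.
rewrite Zstat_drift ?ctrl_size_gt0 // gerDl mulr_le0_ge0 ?subr_le0 //.
by rewrite invr_ge0 mulr_ge0 ?sqrtr_ge0 ?ltW.
Qed.

Section PathComparison.
Context {R : realType} {D : design R} (sigma : R).

Definition arm_futile (x : data_t D) (k : 'I_(K D)) : Prop :=
  exists j, [/\ (1 <= j <= J D k)%N,
     (forall i, (1 <= i < j)%N -> cont sigma x k i) & Zstat sigma x k j < lb D k j].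

(* If the path of arm k under x is dominated by its path under y, then a
   rejection of H_{0k} under x rules out futility of arm k under y: the
   first exit of y below l would force x below l earlier than the
   rejection, and a rejection of x before that exit would push y above u. *)
Lemma rejected_arm_not_futile {x y : data_t D} {k : 'I_(K D)} :
  (forall i, (1 <= i <= J D k)%N -> lb D k i <= ub D k i) ->
  (forall i, (1 <= i <= J D k)%N -> Zstat sigma x k i <= Zstat sigma y k i) ->
  rejects sigma x k -> ~ arm_futile y k.
Proof.
move=> lb_le_ub Z_le [j [jJ [_ cont_x] rej]] [j' [j'J cont_y fut]].
have /andP[j_ge1 _] := jJ; have /andP[j'_ge1 _] := j'J.
case: (ltngtP j' j) => [j'_lt | j_lt | j'_eq].
- have /andP[lb_le _] : cont sigma x k j' by apply: cont_x; rewrite j'_ge1.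
  by have := le_lt_trans (le_trans lb_le (Z_le j' j'J)) fut; rewrite ltxx.
- have /andP[_ le_ub] : cont sigma y k j by apply: cont_y; rewrite j_ge1.
  by have := lt_le_trans rej (le_trans (Z_le j jJ) le_ub); rewrite ltxx.
- move: fut; rewrite j'_eq => fut.
  have := lt_le_trans (le_lt_trans (lb_le_ub j jJ) rej) (Z_le j jJ).
  by rewrite ltNge (ltW fut).
Qed.

End PathComparison.

Lemma fwer_event_sub_not_futile {R : realType} {D : design R} (sigma : R)
  {T : Type} (mu : option 'I_(K D) -> R) (E : option 'I_(K D) -> nat -> T -> R) :
  design_ok D -> 0 < sigma ->
  [set w | fwer_event sigma mu (outcomes mu sigma E w)]
  `<=` ~` [set w | all_futile sigma (outcomes (fun _ => 0) sigma E w)].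
Proof.
move=> ok sigma_gt0 w [k [null rej]] futile.
apply: (rejected_arm_not_futile sigma _ _ rej (futile k)) => i iJ.
- by case: ok => _ [_ lb_le_ub _]; exact: lb_le_ub.
- exact: Zstat_le_global_null.
Qed.

Section PredicateMeasurability.
Context {d : measure_display} {T : measurableType d}.

Lemma measurable_prop (P : Prop) : measurable [set _ : T | P].
Proof.
have [p | np] := pselect P.
  by rewrite (_ : [set _ | P] = setT) //; apply/seteqP; split.
by rewrite (_ : [set _ | P] = set0) //; apply/seteqP; split.
Qed.

Lemma measurable_andb (a b : T -> bool) :
  measurable [set w | a w] -> measurable [set w | b w] ->
  measurable [set w | a w && b w].
Proof.
move=> ma mb; rewrite (_ : [set w | _] = [set w | a w] `&` [set w | b w]).
  exact: measurableI.
by apply/seteqP; split => w /=; [case/andP | case=> -> ->].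
Qed.

Lemma measurable_and3 (A B C : T -> Prop) :
  measurable [set w | A w] -> measurable [set w | B w] ->
  measurable [set w | C w] -> measurable [set w | [/\ A w, B w & C w]].
Proof.
move=> mA mB mC.
rewrite (_ : [set w | _] = [set w | A w /\ B w] `&` [set w | C w]).
  exact/measurableI/mC/measurableI.
by apply/seteqP; split => w /=; [case | case=> -[]].
Qed.

Lemma measurable_imp (A B : T -> Prop) :
  measurable [set w | A w] -> measurable [set w | B w] ->
  measurable [set w | A w -> B w].
Proof.
move=> mA mB; rewrite (_ : [set w | _] = ~` [set w | A w] `|` [set w | B w]).
  exact/measurableU/mB/measurableC.
apply/seteqP; split => w /=.
  by have [a | na] := pselect (A w) => AB; [right; exact: AB | left].
by case=> [na a | b _] //; exfalso; exact: na.
Qed.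

Lemma measurable_exists (I : countType) (Q : I -> T -> Prop) :
  (forall i, measurable [set w | Q i w]) -> measurable [set w | exists i, Q i w].
Proof.
move=> mQ; rewrite (_ : [set w | _] = \bigcup_i [set w | Q i w]).
  exact: countable_bigcupT_measurable (countableP _) mQ.
by apply/seteqP; split => w /= [i]; [exists i | exists i].
Qed.

Lemma measurable_forall (I : countType) (Q : I -> T -> Prop) :
  (forall i, measurable [set w | Q i w]) -> measurable [set w | forall i, Q i w].
Proof.
move=> mQ; rewrite (_ : [set w | _] = ~` [set w | exists i, ~ Q i w]).
  by apply/measurableC/measurable_exists => i; exact: measurableC (mQ i).
apply/seteqP; split => w /= Qw; first by move=> [i]; apply; exact: Qw.
by move=> i; apply: contrapT => nQ; apply: Qw; exists i.
Qed.

Lemma measurable_le {R : realType} (f g : T -> R) :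
  measurable_fun setT f -> measurable_fun setT g -> measurable [set w | f w <= g w].
Proof.
move=> mf mg; have := measurable_realfun.measurable_fun_ler mf mg measurableT.
by move=> /(_ [set true]); rewrite setTI; apply.
Qed.

Lemma measurable_lt {R : realType} (f g : T -> R) :
  measurable_fun setT f -> measurable_fun setT g -> measurable [set w | f w < g w].
Proof.
move=> mf mg; have := measurable_realfun.measurable_fun_ltr mf mg measurableT.
by move=> /(_ [set true]); rewrite setTI; apply.
Qed.

End PredicateMeasurability.

Section TrialEvents.
Context {R : realType} {D : design R} (sigma : R) {d : measure_display}
  {T : measurableType d} (E : option 'I_(K D) -> nat -> T -> R)
  (mu : option 'I_(K D) -> R).
Hypothesis mE : forall a i, measurable_fun setT (E a i).

Let x (w : T) : data_t D := outcomes mu sigma E w.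

Lemma measurable_Zstat k j : measurable_fun setT (fun w => Zstat sigma (x w) k j).
Proof.
rewrite /Zstat /x /outcomes.
apply: measurable_realfun.measurable_funM; last exact: measurable_cst.
apply: measurable_realfun.measurable_funB;
  apply: measurable_realfun.measurable_funM => //; apply: measurable_sum => i;
  apply: measurable_realfun.measurable_funD => //;
  exact: measurable_realfun.measurable_funM.
Qed.

Lemma measurable_cont k i : measurable [set w | cont sigma (x w) k i].
Proof. by apply: measurable_andb; apply: measurable_le => //; exact: measurable_Zstat. Qed.

Lemma measurable_cont_before k j :
  measurable [set w | forall i, (1 <= i < j)%N -> cont sigma (x w) k i].
Proof.
apply: measurable_forall => i.
by apply: measurable_imp; [exact: measurable_prop | exact: measurable_cont].
Qed.

Lemma measurable_nostop t : measurable [set w | nostop sigma (x w) t].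
Proof.
elim: t => [|t IH] /=; first exact: measurable_prop.
apply: measurableI => //; apply: measurable_forall => k.
apply: measurable_imp; first exact: measurable_prop.
apply: measurable_imp; first exact: measurable_cont_before.
by apply: measurable_le => //; exact: measurable_Zstat.
Qed.

Lemma measurable_all_futile : measurable [set w | all_futile sigma (x w)].
Proof.
apply: measurable_forall => k; apply: measurable_exists => j.
apply: measurable_and3; [exact: measurable_prop | exact: measurable_cont_before |].
by apply: measurable_lt => //; exact: measurable_Zstat.
Qed.

Lemma measurable_fwer_event : measurable [set w | fwer_event sigma mu (x w)].
Proof.
apply: measurable_exists => k; apply: measurableI; first exact: measurable_prop.
apply: measurable_exists => j.
apply: measurable_and3; first exact: measurable_prop.
  by apply: measurableI; [exact: measurable_nostop | exact: measurable_cont_before].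
by apply: measurable_lt => //; exact: measurable_Zstat.
Qed.

End TrialEvents.

Theorem corollary1 (R : realType) (D : design R) (sigma alpha : R)
  (d : measure_display) (T : measurableType d) (P : probability T R)
  (E : option 'I_(K D) -> nat -> T -> R) :
  design_ok D -> 0 < sigma ->
  iid_std_normal P (fun p : option 'I_(K D) * nat => E p.1 p.2) ->
  (* boundaries calibrated under the global null mu_0 = ... = mu_K *)
  (forall m : R,
     P [set w | all_futile sigma (outcomes (fun _ => m) sigma E w)]
     = ((1 - alpha)%:E)) ->
  (* strong FWER control *)
  forall mu : option 'I_(K D) -> R,
    (P [set w | fwer_event sigma mu (outcomes mu sigma E w)] <= alpha%:E)%E.
Proof.
move=> ok sigma_gt0 [mE _ _] calibrated mu.
have mE_ai a i : measurable_fun setT (E a i) := mE (a, i).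
pose futile0 := [set w | all_futile sigma (outcomes (fun _ => 0) sigma E w)].
have m_futile0 : measurable futile0 by exact: measurable_all_futile.
apply: (@le_trans _ _ (P (~` futile0))).
  apply: le_measure (fwer_event_sub_not_futile sigma mu E ok sigma_gt0).
    by rewrite inE; exact: measurable_fwer_event.
  by rewrite inE; exact: measurableC.
by rewrite probability_setC // calibrated -EFinB lee_fin opprB addrC subrK.
Qed.
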